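(* Let $G=(V,E)$ be a complete (directed or undirected) graph on $n$ vertices with cost function $c: V\times V\to\mathbb{R}$, and let $k,l$ be integers with $1\le k<l\le n$. Suppose there are no vertices $a,b,w\in V$ with $b\neq w$ and $c(a,b)=c(a,w)$. Then the length of the tour returned by $l$-RNN on $G$ is less than or equal to the length of the tour returned by $k$-RNN on $G$.
   Context: A tour is an ordering $T=(v_1,\dots,v_n)$ of all vertices of $V$ (a Hamiltonian cycle); its length is $\sum_{i=1}^{n-1} c(v_i,v_{i+1}) + c(v_n,v_1)$. For an integer $k\ge 1$, the $k$-Repetitive-Nearest-Neighbor ($k$-RNN) algorithm works as follows. Step 1: for every ordered sequence $(v_1,\dots,v_k)$ of $k$ distinct vertices, form the partial tour $T=(v_1,\dots,v_k)$ and mark these vertices visited. Step 2: set $i=k$; while unvisited vertices remain, let $v_{i+1}$ be an unvisited vertex minimizing $c(v_i,\cdot)$ over unvisited vertices (if there are several, any one is chosen), append $v_{i+1}$ to $T$, mark it visited, and increment $i$. Step 3: among all $\frac{n!}{(n-k)!}$ tours so constructed, return one of minimum length. The result of a run is the length of the returned tour. *)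

From mathcomp Require Import all_boot all_order all_algebra.
Set Implicit Arguments. Unset Strict Implicit. Unset Printing Implicit Defensive.
Import Order.TTheory GRing.Theory Num.Theory.
Local Open Scope ring_scope.

Section RNN.
Variables (R : realFieldType) (V : finType) (c : V -> V -> R).

Definition tour_len (T : seq V) : R :=
  \sum_(e <- zip T (rot 1 T)) c e.1 e.2.

(* T is a possible outcome of Step 2 of k-RNN started from the partial
   tour p: T is an ordering of all vertices, starts with p, and every
   vertex appended after the first k positions is an unvisited vertex
   minimising the cost from the current (last) vertex over all unvisited
   vertices (ties broken arbitrarily). *)
Definition nn_completion (k : nat) (p T : seq V) : Prop :=
  [/\ uniq T, size T = #|V|, take k T = p &
      forall (pre post : seq V) (a b : V),
        T = pre ++ a :: b :: post -> (k <= size (rcons pre a))%N ->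
        forall w : V, w \notin rcons pre a -> c a b <= c a w].

(* A run of k-RNN: for each ordered sequence of k distinct vertices,
   the tour constructed from it (one choice among ties). *)
Definition rnn_run (k : nat) (run : seq V -> seq V) : Prop :=
  forall p : seq V, uniq p -> size p = k -> nn_completion k p (run p).

Definition rnn_result (k : nat) (run : seq V -> seq V) (x : R) : Prop :=
  (exists2 p : seq V, uniq p /\ size p = k & x = tour_len (run p)) /\
  (forall p : seq V, uniq p -> size p = k -> x <= tour_len (run p)).

End RNN.

From mathcomp Require Import all_boot all_order all_algebra.
Set Implicit Arguments. Unset Strict Implicit. Unset Printing Implicit Defensive.
Import Order.TTheory GRing.Theory Num.Theory.
Local Open Scope ring_scope.

(* Without ties, nearest-neighbour completion is deterministic: a
   completion is determined by its first k > 0 vertices.  A completion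
   with threshold k is also one with any larger threshold l, so the tour
   k-RNN builds from p is exactly the tour l-RNN builds from the first l
   vertices of that tour.  Every tour constructed by k-RNN is therefore
   also constructed by l-RNN, whose minimum can only be smaller. *)

Section NearestNeighbourCompletion.
Variables (R : realFieldType) (V : finType) (c : V -> V -> R).

Lemma nn_completion_widen k1 k2 p T : (k1 <= k2)%N ->
  nn_completion c k1 p T -> nn_completion c k2 (take k2 T) T.
Proof.
move=> le_k12 [uT szT _ nnT]; split=> // pre post a b eT le_k2.
exact: nnT eT (leq_trans le_k12 le_k2).
Qed.

Hypothesis c_inj : forall a, injective (c a).

Lemma nn_completion_next_eq k p1 p2 T1 T2 pre b1 b2 s1 s2 :
  (0 < k)%N -> (k <= size pre)%N ->
  nn_completion c k p1 T1 -> nn_completion c k p2 T2 ->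
  T1 = pre ++ b1 :: s1 -> T2 = pre ++ b2 :: s2 -> b1 = b2.
Proof.
move=> k_gt0 + [u1 _ _ nn1] [u2 _ _ nn2].
case/lastP: pre => [|q a]; first by rewrite leqNgt k_gt0.
rewrite !cat_rcons => k_qa e1 e2.
have fresh T b s : uniq T -> T = q ++ a :: b :: s -> b \notin rcons q a.
  by move=> + eT; rewrite eT -!cat_rcons cat_uniq rcons_uniq => /andP[/andP[]].
apply: (@c_inj a); apply/eqP; rewrite eq_le.
by rewrite (nn1 _ _ _ _ e1 k_qa) ?(nn2 _ _ _ _ e2 k_qa) ?(fresh _ _ _ u1 e1)
  ?(fresh _ _ _ u2 e2).
Qed.

Lemma nn_completion_unique k p T1 T2 : (0 < k)%N ->
  nn_completion c k p T1 -> nn_completion c k p T2 -> T1 = T2.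
Proof.
move=> k_gt0 nn1 nn2; have [_ sz1 tk1 _] := nn1; have [_ sz2 tk2 _] := nn2.
suff take_eq i : take i T1 = take i T2.
  by rewrite -(take_size T1) take_eq sz1 -sz2 take_size.
elim: i => [|i IH]; first by rewrite !take0.
have [lt_ik | le_ki] := ltnP i k.
  by rewrite -(take_takel T1 lt_ik) tk1 -tk2 take_takel.
have size_drop_eq : size (drop i T1) = size (drop i T2).
  by rewrite !size_drop sz1 sz2.
rewrite -addn1 !takeD IH; congr (_ ++ _).
case e1: (drop i T1) size_drop_eq => [|b1 s1];
  case e2: (drop i T2) => [|b2 s2] //= _.
have lt_iT2 : (i < size T2)%N by rewrite -subn_gt0 -size_drop e2.
have eT1 : T1 = take i T2 ++ b1 :: s1 by rewrite -IH -e1 cat_take_drop.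
have eT2 : T2 = take i T2 ++ b2 :: s2 by rewrite -e2 cat_take_drop.
by rewrite !take0 (nn_completion_next_eq k_gt0 _ nn1 nn2 eT1 eT2) //
  size_takel // ltnW.
Qed.

End NearestNeighbourCompletion.

Theorem theorem1 (R : realFieldType) (V : finType) (n : nat)
    (c : V -> V -> R) (k l : nat) :
  #|V| = n ->
  (1 <= k)%N -> (k < l)%N -> (l <= n)%N ->
  ~ (exists a b w : V, b != w /\ c a b = c a w) ->
  forall (runl runk : seq V -> seq V) (xl xk : R),
    rnn_run c l runl -> rnn_result c l runl xl ->
    rnn_run c k runk -> rnn_result c k runk xk ->
    xl <= xk.
Proof.
move=> Vn k_gt0 lt_kl le_ln no_ties runl runk xl xk runlP [_ xl_min] runkP.
case=> -[p [up szp] ->] _.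
have c_inj a : injective (c a).
  by move=> b w cab; apply/eqP; apply: contra_notT no_ties => ?; exists a, b, w.
have [uT szT _ _] := runkP p up szp.
have nnT := nn_completion_widen (ltnW lt_kl) (runkP p up szp).
have u_pre : uniq (take l (runk p)) by rewrite take_uniq.
have sz_pre : size (take l (runk p)) = l by rewrite size_takel // szT Vn.
have l_gt0 : (0 < l)%N by apply: leq_trans k_gt0 (ltnW lt_kl).
rewrite -(nn_completion_unique c_inj l_gt0 (runlP _ u_pre sz_pre) nnT).
exact: xl_min.
Qed.
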